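(* Let $\alpha\in(0,1)$, and let $\mathcal E=(N,\{a_1,a_2\},\vec\sigma)$ be an election with two alternatives. Partition $N$ into four sets according to the agents' preferences: $N_1$ ($a_1\succ a_2$), $N_2$ ($a_2\succ a_1$), $N_3$ ($a_1\succ\!\!\succ a_2$) and $N_4$ ($a_2\succ\!\!\succ a_1$). Define two placements on the real line, each with distance $d(x,y)=|x-y|$. - Placement $d_1$: $a_1$ at $0$; $N_3$ at $2$; $N_1$ at $\frac1\alpha+1$; $N_2$ at $\frac2\alpha$; $a_2$ and $N_4$ at $\frac2\alpha+2$. - Placement $d_2$: $a_1$ at $0$; $N_3$ at $2$; $N_1$ at $\frac1\alpha+1$; $a_2$ and $N_4$ at $\frac2\alpha+2$; $N_2$ at $\frac2\alpha+2+\frac{2\alpha+2}{1-\alpha}$. Then, for the distortion restricted to 1-Euclidean metrics, $$\mathsf{dist}_\alpha(a_1,\mathcal E)=\max\left(\frac{\mathrm{sc}_{d_1}(a_1)}{\mathrm{sc}_{d_1}(a_2)},\ \frac{\mathrm{sc}_{d_2}(a_1)}{\mathrm{sc}_{d_2}(a_2)},\ 1\right).$$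
   Context: Each agent $i$ reports $\sigma_i=(\pi_i,\Join_i)$, a ranking of the two alternatives together with $\Join_i(1)\in\{\succ,\succ\!\!\succ\}$. The profile is $\alpha$-consistent with $d$ (mandatory elicitation) if: - whenever agent $i$ reports $x\succ y$, we have $d(i,y)\ge d(i,x)>\alpha d(i,y)$; - whenever agent $i$ reports $x\succ\!\!\succ y$, we have $d(i,x)\le\alpha d(i,y)$. Here $\mathrm{sc}_d(a)=\sum_{i\in N}d(i,a)$. The 1-Euclidean distortion is $\mathsf{dist}_\alpha(a,\mathcal E)=\sup_d \mathrm{sc}_d(a)/\min_b\mathrm{sc}_d(b)$, where the supremum ranges over metrics $d(x,y)=|x-y|$ induced by placing all agents and alternatives on $\mathbb R$ with which the profile is $\alpha$-consistent. A ratio with zero denominator and positive numerator is read as $+\infty$. *)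

From HB Require Import structures.
From mathcomp Require Import all_boot all_order all_algebra.
From mathcomp Require Import all_classical all_reals.
From mathcomp Require Import ereal.
Set Implicit Arguments. Unset Strict Implicit. Unset Printing Implicit Defensive.
Import Order.TTheory GRing.Theory Num.Theory.
Local Open Scope ring_scope.

Inductive alt := A1 | A2.
Definition other (a : alt) : alt := match a with A1 => A2 | A2 => A1 end.

(* Strength of a reported comparison: x ≻ y (Weak) or x ≻≻ y (Strong). *)
Inductive strength := Weak | Strong.

(* A report sigma_i = (pi_i, ⋈_i(1)): with two alternatives the ranking pi_i is
   determined by its top alternative [top]; [str] is ⋈_i(1). *)
Record report := Report { top : alt ; str : strength }.

Section Defs.
Variable R : realType.

Definition dist_ag (n : nat) (p : 'I_n -> R) (q : alt -> R) (i : 'I_n) (a : alt) : R :=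
  `|p i - q a|.

Definition consistent (n : nat) (alpha : R) (sigma : 'I_n -> report)
    (p : 'I_n -> R) (q : alt -> R) : Prop :=
  forall i : 'I_n,
    let x := top (sigma i) in
    let y := other x in
    match str (sigma i) with
    | Weak => dist_ag p q i y >= dist_ag p q i x /\ dist_ag p q i x > alpha * dist_ag p q i y
    | Strong => dist_ag p q i x <= alpha * dist_ag p q i y
    end.

Definition sc (n : nat) (p : 'I_n -> R) (q : alt -> R) (a : alt) : R :=
  \sum_(i < n) dist_ag p q i a.

(* Ratio x / y as an extended real: positive / 0 = +oo; 0 / 0 = 1. *)
Definition eratio (x y : R) : \bar R :=
  if y == 0 then (if x == 0 then 1%E else +oo%E) else (x / y)%:E.

Definition dist_euclid (n : nat) (alpha : R) (sigma : 'I_n -> report) (a : alt) : \bar R :=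
  ereal_sup [set r : \bar R | exists (p : 'I_n -> R) (q : alt -> R),
      consistent alpha sigma p q /\
      r = eratio (sc p q a) (Num.min (sc p q A1) (sc p q A2))].

(* Placement d_1. Groups: N1 = (A1,Weak), N2 = (A2,Weak), N3 = (A1,Strong),
   N4 = (A2,Strong). *)
Definition q1 (alpha : R) (a : alt) : R :=
  match a with A1 => 0 | A2 => 2 / alpha + 2 end.
Definition p1 (n : nat) (alpha : R) (sigma : 'I_n -> report) (i : 'I_n) : R :=
  match top (sigma i), str (sigma i) with
  | A1, Weak => 1 / alpha + 1
  | A2, Weak => 2 / alpha
  | A1, Strong => 2
  | A2, Strong => 2 / alpha + 2
  end.

Definition q2 (alpha : R) (a : alt) : R :=
  match a with A1 => 0 | A2 => 2 / alpha + 2 end.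
Definition p2 (n : nat) (alpha : R) (sigma : 'I_n -> report) (i : 'I_n) : R :=
  match top (sigma i), str (sigma i) with
  | A1, Weak => 1 / alpha + 1
  | A2, Weak => 2 / alpha + 2 + (2 * alpha + 2) / (1 - alpha)
  | A1, Strong => 2
  | A2, Strong => 2 / alpha + 2
  end.

End Defs.

From HB Require Import structures.
From mathcomp Require Import all_boot all_order all_algebra.
From mathcomp Require Import all_classical all_reals.
From mathcomp Require Import ereal.
From mathcomp Require Import ring lra.
Set Implicit Arguments.
Unset Strict Implicit.
Unset Printing Implicit Defensive.
Import Order.TTheory GRing.Theory Num.Theory.
Local Open Scope ring_scope.

(* Compare an alpha-consistent placement with d_1 and d_2 after scaling it so
   that its alternatives are 2/alpha + 2 apart, as they are in d_1 and d_2.  On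
   the line, the report of an agent confines its distances x = d(i, a_1) and
   z = d(i, a_2), and a case analysis over the four groups shows that for every
   l >= 1 the quantity x - l z is at most its scaled value in d_1 or in d_2:
   the two placements differ only on N_2, and which one is larger depends only
   on l.
   Summing with l = sc(a_1) / sc(a_2) bounds the ratio of the placement by that
   of d_1 or d_2; if sc(a_2) = 0, every agent is in N_4 and the ratio of d_1 is
   infinite.  Conversely, d_1 and d_2 fail to be consistent only through the
   strict inequality of the N_2 agents, so moving these agents by a small s
   gives consistent placements whose ratios approach those of d_1 and d_2. *)

Section RealLine.
Variable R : realDomainType.

Definition collinear (x z e : R) := x + z = e \/ x - z = e \/ z - x = e.

Lemma collinear_dist (p a b : R) : collinear `|p - a| `|p - b| `|a - b|.
Proof.
rewrite /collinear.
have [h1|h1] := lerP 0 (p - a); have [h2|h2] := lerP 0 (p - b);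
  have [h3|h3] := lerP 0 (a - b);
  rewrite ?(ger0_norm h1) ?(ltr0_norm h1) ?(ger0_norm h2) ?(ltr0_norm h2)
    ?(ger0_norm h3) ?(ltr0_norm h3); lra.
Qed.

Lemma sumr_ord_gt0 m (f : 'I_m -> R) :
  (0 < m)%N -> (forall i, 0 < f i) -> 0 < \sum_(i < m) f i.
Proof.
case: m f => // m f _ f_gt0; rewrite big_ord_recl.
by apply: ltr_pwDl (f_gt0 _) _; apply: sumr_ge0 => i _; exact: ltW.
Qed.

Lemma ord_gt0_of_sumr_neq0 m (f : 'I_m -> R) : \sum_(i < m) f i != 0 -> (0 < m)%N.
Proof. by case: m f => // f; rewrite big_ord0 eqxx. Qed.

End RealLine.

Section Ratios.
Variable R : realType.
Local Open Scope ereal_scope.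

Lemma sc_ge0 n (p : 'I_n -> R) q a : (0 <= sc p q a)%R.
Proof. by apply: sumr_ge0 => i _; exact: normr_ge0. Qed.

Lemma eratio_le1 (x y : R) : (0 <= x <= y)%R -> eratio x y <= 1.
Proof.
case/andP=> x_ge0 xy; rewrite /eratio; have [y0|y_neq0] := eqVneq y 0%R.
  by rewrite (_ : x = 0%R) ?eqxx //; apply/eqP; rewrite eq_le x_ge0 -y0 xy.
by rewrite lee_fin ler_pdivrMr ?mul1r // lt_def y_neq0 (le_trans x_ge0).
Qed.

Lemma eratio_min (x y : R) : (0 <= x)%R -> (0 <= y)%R ->
  eratio x (Num.min x y) = Order.max (eratio x y) 1.
Proof.
move=> x_ge0 y_ge0; have [xy|yx] := leP x y.
  rewrite max_r ?eratio_le1 ?x_ge0 // /eratio.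
  by case: eqVneq => [//|x_neq0]; rewrite mulfV.
rewrite max_l // /eratio; have [y0|y_neq0] := eqVneq y 0%R.
  by rewrite gt_eqF ?leey // -y0.
by rewrite lee_fin ler_pdivlMr ?mul1r ?ltW // lt_def y_neq0.
Qed.

Lemma le_eratio (x y x' y' : R) : (0 < y)%R -> (0 < x')%R -> (0 <= y')%R ->
  (x * y' <= x' * y)%R -> eratio x y <= eratio x' y'.
Proof.
move=> y_gt0 x'_gt0 y'_ge0 cross; rewrite /eratio (gt_eqF y_gt0) (gt_eqF x'_gt0).
have [//|y'_neq0] := eqVneq y' 0%R; first by rewrite leey.
have y'_gt0 : (0 < y')%R by rewrite lt_def y'_neq0.
by rewrite lee_fin ler_pdivrMr // mulrAC ler_pdivlMr.
Qed.

Lemma EFin_le_ereal_sup (S : set (\bar R)) (x : R) :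
  (forall r, (r < x)%R -> r%:E <= ereal_sup S) -> x%:E <= ereal_sup S.
Proof.
move=> lb; case E: (ereal_sup S) => [t| |]; rewrite ?leey //.
- rewrite lee_fin; apply/ler_addgt0Pr => e e_gt0.
  by rewrite -lerBlDr -lee_fin -E; apply: lb; rewrite ltrBlDr ltrDl.
- have /lb : (x - 1 < x)%R by rewrite ltrBlDr ltrDl.
  by rewrite E leeNy_eq.
Qed.

End Ratios.

Lemma exists_small_perturbation (R : realFieldType) (F G k m r : R) :
  0 < G -> 0 <= k -> 0 < m -> r < F / G ->
  exists2 s, 0 < s <= m & r * (G + s * k) <= F - s * k.
Proof.
move=> G_gt0 k_ge0 m_gt0; rewrite ltr_pdivlMr // -subr_gt0 => d_gt0.
have norm_r_ge0 := normr_ge0 r.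
have w_gt0 : 0 < (1 + `|r|) * (1 + k) by apply: mulr_gt0; lra.
set s := Num.min m ((F - r * G) / ((1 + `|r|) * (1 + k))).
have s_gt0 : 0 < s by rewrite lt_min m_gt0 divr_gt0.
have s_small : s * ((1 + `|r|) * (1 + k)) <= F - r * G.
  by rewrite -ler_pdivlMr // ge_min lexx orbT.
exists s; first by rewrite s_gt0 ge_min lexx.
have skr_le : s * k * r <= s * k * `|r|.
  by rewrite ler_wpM2l ?ler_norm // mulr_ge0 // ltW.
have sr_ge0 : 0 <= s * `|r| by rewrite mulr_ge0 // ltW.
lra.
Qed.

Section Election.
Variables (R : realType) (n : nat) (alpha : R) (sigma : 'I_n -> report).
Hypotheses (alpha_gt0 : 0 < alpha) (alpha_lt1 : alpha < 1).

Let u := alpha^-1.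
Let c := (2 * alpha + 2) / (1 - alpha).

Let alpha_u : alpha * u = 1.
Proof. by rewrite mulfV ?gt_eqF. Qed.

Let u_gt1 : 1 < u.
Proof. by rewrite invf_gt1. Qed.

(* In d_2 an N_2 agent at distance c beyond a_2 satisfies d(i, a_2) = alpha d(i, a_1),
   i.e. c = alpha (2 u + 2 + c). *)
Let c_fixed : c * (1 - alpha) = 2 * alpha + 2.
Proof. by rewrite mulfVK // subr_eq0 gt_eqF. Qed.

Let c_gt0 : 0 < c.
Proof. by apply: divr_gt0; have := alpha_gt0; have := alpha_lt1; lra. Qed.

(* lra ignores section hypotheses, hence the explicit copies. *)
Ltac lra_alpha := have ? := alpha_gt0; have ? := alpha_lt1; have ? := alpha_u;
  have ? := u_gt1; have ? := c_fixed; have ? := c_gt0; lra.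

Ltac solve_norm := first [rewrite ger0_norm; lra_alpha | rewrite ler0_norm; lra_alpha].

Definition placement_dist (b : bool) (r : report) (a : alt) : R :=
  match top r, str r, a with
  | A1, Weak, _ => u + 1
  | A2, Weak, A1 => if b then 2 * u else 2 * u + 2 + c
  | A2, Weak, A2 => if b then 2 else c
  | A1, Strong, A1 => 2
  | A1, Strong, A2 => 2 * u
  | A2, Strong, A1 => 2 * u + 2
  | A2, Strong, A2 => 0
  end.

Definition placement (b : bool) : 'I_n -> R :=
  if b then p1 alpha sigma else p2 alpha sigma.

Lemma dist_placement b i a :
  dist_ag (placement b) (q1 alpha) i a = placement_dist b (sigma i) a.
Proof.
rewrite /dist_ag /placement /placement_dist /p1 /p2 /q1 -/u -/c.
by case: b => /=; case: (sigma i) => [[] []]; case: a => /=; solve_norm.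
Qed.

Definition in_N2 (r : report) : R := if r is Report A2 Weak then 1 else 0.

Let n2 := \sum_(i < n) in_N2 (sigma i).

(* The N_2 agents are the only ones violating consistency in d_1 and d_2; moving
   them by s towards a_1 in d_1 and away from a_2 in d_2 repairs this. *)
Definition perturbed (b : bool) (s : R) (i : 'I_n) : R :=
  placement b i + (if b then - s else s) * in_N2 (sigma i).

Definition shift (b : bool) (a : alt) (s : R) : R :=
  if b then (if a is A1 then - s else s) else s.

Lemma dist_perturbed b s i a : 0 <= s <= u - 1 ->
  dist_ag (perturbed b s) (q1 alpha) i a =
  placement_dist b (sigma i) a + shift b a s * in_N2 (sigma i).
Proof.
move=> s_range.
rewrite /dist_ag /perturbed /placement /placement_dist /shift /in_N2 /p1 /p2 /q1 -/u -/c.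
by case: b => /=; case: (sigma i) => [[] []]; case: a => /=; solve_norm.
Qed.

Lemma sc_perturbed b s a : 0 <= s <= u - 1 ->
  sc (perturbed b s) (q1 alpha) a = sc (placement b) (q1 alpha) a + shift b a s * n2.
Proof.
move=> s_range; rewrite /sc mulr_sumr -big_split /=.
by apply: eq_bigr => i _; rewrite dist_perturbed // dist_placement.
Qed.

Lemma perturbed_consistent b s : 0 < s <= u - 1 ->
  consistent alpha sigma (perturbed b s) (q1 alpha).
Proof.
move=> s_range i /=; have s_range' : 0 <= s <= u - 1 by lra.
rewrite !dist_perturbed //.
have ? : 0 < alpha * s by apply: mulr_gt0; lra_alpha.
have ? : alpha * s < s by rewrite gtr_pMl; lra_alpha.
rewrite /placement_dist /shift /in_N2.
by case: (sigma i) => [[] []]; case: b => /= *; try split; lra_alpha.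
Qed.

Definition excess (b : bool) (r : report) (l : R) : R :=
  placement_dist b r A1 - l * placement_dist b r A2.

Definition best_placement (l : R) : bool :=
  excess false (Report A2 Weak) l <= excess true (Report A2 Weak) l.

Lemma excess_le_best b r l : excess b r l <= excess (best_placement l) r l.
Proof.
rewrite /best_placement.
have [d2_le|d1_lt] :=
  leP (excess false (Report A2 Weak) l) (excess true (Report A2 Weak) l);
  by case: b; case: r => [[] []] //; exact: ltW.
Qed.

Section GroupBounds.
Variables (l s x z : R).
Hypotheses (l_ge1 : 1 <= l) (s_ge0 : 0 <= s) (x_ge0 : 0 <= x) (z_ge0 : 0 <= z).
Hypothesis line : collinear x z (s * (2 * u + 2)).

Let triangle : s * (2 * u + 2) <= x + z.
Proof. by case: line => [|[]]; have := x_ge0; have := z_ge0; lra. Qed.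

Let alpha_u_s : alpha * u * s = s.
Proof. by rewrite alpha_u mul1r. Qed.

Let E_ge0 : 0 <= s * (2 * u + 2).
Proof. by apply: mulr_ge0 => //; have := u_gt1; lra. Qed.

Ltac lra_group := have ? := l_ge1; have ? := s_ge0; have ? := x_ge0;
  have ? := z_ge0; have ? := triangle; have ? := alpha_u_s; have ? := E_ge0;
  lra_alpha.

Lemma excess_weak_A1 b : x <= z -> x - l * z <= s * excess b (Report A1 Weak) l.
Proof.
move=> xz; have ? : 0 <= (l - 1) * (z - s * (u + 1)) by apply: mulr_ge0; lra_group.
by rewrite /excess /placement_dist /=; lra_group.
Qed.

Lemma excess_strong_A1 b :
  x <= alpha * z -> x - l * z <= s * excess b (Report A1 Strong) l.
Proof.
move=> xz; have z_ge : 2 * u * s <= z.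
  by rewrite -(ler_pM2l (_ : 0 < 1 + alpha)); lra_group.
have ? : 0 <= (l - alpha) * (z - 2 * u * s) by apply: mulr_ge0; lra_group.
by rewrite /excess /placement_dist /=; lra_group.
Qed.

Lemma excess_strong_A2 b : x - l * z <= s * excess b (Report A2 Strong) l.
Proof.
have ? : x <= z + s * (2 * u + 2) by case: line => [|[]]; lra_group.
have ? : 0 <= (l - 1) * z by apply: mulr_ge0; lra_group.
by rewrite /excess /placement_dist /=; lra_group.
Qed.

Lemma excess_weak_A2 : z <= x -> alpha * x <= z ->
  x - l * z <= s * excess (best_placement l) (Report A2 Weak) l.
Proof.
move=> zx axz.
suff [b excess_b] : exists b, x - l * z <= s * excess b (Report A2 Weak) l.
  exact: le_trans excess_b (ler_wpM2l s_ge0 (excess_le_best _ _ _)).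
have [between|beyond] : x + z = s * (2 * u + 2) \/ x - z = s * (2 * u + 2).
  by case: line => [|[]]; lra_group.
- exists true; rewrite /excess /placement_dist /=.
  have x_le : x <= 2 * u * s.
    by rewrite -(ler_pM2l (_ : 0 < 1 + alpha)); lra_group.
  have ? : 0 <= (1 + l) * (2 * u * s - x) by apply: mulr_ge0; lra_group.
  have ? : l * (x + z) = l * (s * (2 * u + 2)) by rewrite between.
  lra_group.
- exists false; rewrite /excess /placement_dist /=.
  have ? : c * (1 - alpha) * s = (2 * alpha + 2) * s by rewrite c_fixed.
  have ? : alpha * (x - z) = alpha * (s * (2 * u + 2)) by rewrite beyond.
  have z_ge : s * c <= z.
    by rewrite -(ler_pM2l (_ : 0 < 1 - alpha)); lra_group.
  have ? : 0 <= (l - 1) * (z - s * c) by apply: mulr_ge0; lra_group.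
  lra_group.
Qed.

End GroupBounds.

Lemma agent_excess_le p q l s i : consistent alpha sigma p q -> 1 <= l -> 0 <= s ->
  `|q A1 - q A2| = s * (2 * u + 2) ->
  dist_ag p q i A1 - l * dist_ag p q i A2 <= s * excess (best_placement l) (sigma i) l.
Proof.
move=> /(_ i) report_i l_ge1 s_ge0 dist_alts.
have line := collinear_dist (p i) (q A1) (q A2); rewrite dist_alts in line.
have [x_ge0 z_ge0] := (normr_ge0 (p i - q A1), normr_ge0 (p i - q A2)).
move: report_i; rewrite /dist_ag; case: (sigma i) => [[] []] /= report_i.
- exact: excess_weak_A1 (proj1 report_i).
- exact: excess_strong_A1 report_i.
- by case: report_i => zx /ltW; exact: excess_weak_A2.
- exact: excess_strong_A2.
Qed.

Lemma sc_excess_le p q l : consistent alpha sigma p q -> 1 <= l ->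
  sc p q A1 - l * sc p q A2 <=
  `|q A1 - q A2| / (2 * u + 2) *
    (sc (placement (best_placement l)) (q1 alpha) A1
     - l * sc (placement (best_placement l)) (q1 alpha) A2).
Proof.
move=> pq_cons l_ge1.
have u2_gt0 : 0 < 2 * u + 2 by have := u_gt1; lra.
rewrite /sc !mulr_sumr -!sumrB mulr_sumr; apply: ler_sum => i _.
rewrite !dist_placement; apply: agent_excess_le => //.
  by rewrite divr_ge0 // ltW.
by rewrite divfK // gt_eqF.
Qed.

Lemma placement_A1_gt0 b : (0 < n)%N -> 0 < sc (placement b) (q1 alpha) A1.
Proof.
move=> n_gt0; rewrite /sc; under eq_bigr do rewrite dist_placement.
apply: sumr_ord_gt0 => // i; rewrite /placement_dist.
by case: (sigma i) => [[] []]; case: b => /=; lra_alpha.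
Qed.

Lemma ratio_le_placement p q : consistent alpha sigma p q ->
  0 < sc p q A2 -> sc p q A2 < sc p q A1 ->
  exists b, (eratio (sc p q A1) (sc p q A2) <=
             eratio (sc (placement b) (q1 alpha) A1) (sc (placement b) (q1 alpha) A2))%E.
Proof.
move=> pq_cons Z_gt0 ZX.
have alts_neq : q A1 != q A2.
  by apply/eqP => qE; move: ZX; rewrite /sc /dist_ag qE ltxx.
set X := sc p q A1 in ZX *; set Z := sc p q A2 in Z_gt0 ZX *.
have l_ge1 : 1 <= X / Z by rewrite ler_pdivlMr // mul1r ltW.
have gap := sc_excess_le pq_cons l_ge1; rewrite -/X -/Z divfK ?gt_eqF // subrr in gap.
exists (best_placement (X / Z)).
have u2_gt0 : 0 < 2 * u + 2 by lra_alpha.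
rewrite pmulr_rge0 ?divr_gt0 ?normr_gt0 ?subr_eq0 // subr_ge0 in gap.
have n_gt0 : (0 < n)%N := ord_gt0_of_sumr_neq0 (lt0r_neq0 Z_gt0).
apply: le_eratio => //; first exact: placement_A1_gt0.
  exact: sc_ge0.
by rewrite mulrAC ler_pdivrMr in gap.
Qed.

Lemma consistent_at_A2_strong p q i : consistent alpha sigma p q ->
  dist_ag p q i A2 = 0 -> 0 < dist_ag p q i A1 -> sigma i = Report A2 Strong.
Proof.
move=> /(_ i) /= report_i z0 x_gt0; have ax_gt0 := mulr_gt0 alpha_gt0 x_gt0.
by move: report_i; case: (sigma i) => [[] []] //=; rewrite z0 => *; exfalso; lra.
Qed.

Lemma placement1_ratio_infty p q : consistent alpha sigma p q ->
  sc p q A2 = 0 -> 0 < sc p q A1 ->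
  eratio (sc (placement true) (q1 alpha) A1) (sc (placement true) (q1 alpha) A2) = +oo%E.
Proof.
move=> pq_cons Z0 X_gt0.
have alts_neq : q A1 != q A2.
  by apply/eqP => qE; move: X_gt0; rewrite -Z0 /sc /dist_ag qE ltxx.
have at_A2 i : dist_ag p q i A2 = 0.
  by apply: psumr_eq0P Z0 i isT => j _; exact: normr_ge0.
have all_strong_A2 i : sigma i = Report A2 Strong.
  apply: (consistent_at_A2_strong pq_cons (at_A2 i)).
  move: (at_A2 i); rewrite /dist_ag => /normr0_eq0/subr0_eq ->.
  by rewrite normr_gt0 subr_eq0 eq_sym.
have -> : sc (placement true) (q1 alpha) A2 = 0.
  by rewrite /sc big1 // => i _; rewrite dist_placement all_strong_A2.
rewrite /eratio eqxx gt_eqF //; apply: placement_A1_gt0.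
exact: ord_gt0_of_sumr_neq0 (lt0r_neq0 X_gt0).
Qed.

Lemma ratio_le_placements p q : consistent alpha sigma p q ->
  (eratio (sc p q A1) (sc p q A2) <=
   Order.max
     (eratio (sc (placement true) (q1 alpha) A1) (sc (placement true) (q1 alpha) A2))
     (Order.max
       (eratio (sc (placement false) (q1 alpha) A1) (sc (placement false) (q1 alpha) A2))
       1))%E.
Proof.
move=> pq_cons; have [XZ|ZX] := leP (sc p q A1) (sc p q A2).
  by rewrite !le_max eratio_le1 ?orbT // sc_ge0.
have [Z0|Z_gt0] : sc p q A2 = 0 \/ 0 < sc p q A2 by have := sc_ge0 p q A2; lra.
  by rewrite (placement1_ratio_infty pq_cons Z0) ?le_max ?leey // -Z0.
have [b ratio_le] := ratio_le_placement pq_cons Z_gt0 ZX.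
by apply: le_trans ratio_le _; case: b; rewrite !le_max lexx ?orbT.
Qed.

Lemma perturbed_ratio_le_dist_euclid b s : 0 < s <= u - 1 ->
  (Order.max
     (eratio (sc (perturbed b s) (q1 alpha) A1) (sc (perturbed b s) (q1 alpha) A2)) 1
   <= dist_euclid alpha sigma A1)%E.
Proof.
move=> s_range; apply: ereal_sup_ubound; exists (perturbed b s), (q1 alpha).
by split; [exact: perturbed_consistent | rewrite eratio_min // sc_ge0].
Qed.

Lemma one_le_dist_euclid : (1 <= dist_euclid alpha sigma A1)%E.
Proof.
apply: le_trans (perturbed_ratio_le_dist_euclid true (s := u - 1) _).
  by rewrite le_max lexx orbT.
by lra_alpha.
Qed.

Lemma n2_le_placement_A2 b :
  placement_dist b (Report A2 Weak) A2 * n2 <= sc (placement b) (q1 alpha) A2.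
Proof.
rewrite mulr_sumr /sc; apply: ler_sum => i _.
rewrite dist_placement /in_N2 /placement_dist.
by case: (sigma i) => [[] []]; case: b => /=; lra_alpha.
Qed.

Lemma placement_ratio_le_dist_euclid b :
  (eratio (sc (placement b) (q1 alpha) A1) (sc (placement b) (q1 alpha) A2)
   <= dist_euclid alpha sigma A1)%E.
Proof.
have u1_gt0 : 0 < u - 1 by lra_alpha.
have n2_ge0 : 0 <= n2.
  by apply: sumr_ge0 => i _; rewrite /in_N2; case: (sigma i) => [[] []].
have [n2_0|n2_gt0] : n2 = 0 \/ 0 < n2 by lra.
  apply: le_trans (perturbed_ratio_le_dist_euclid b (s := u - 1) _); last by lra.
  have s_range : 0 <= u - 1 <= u - 1 by lra.
  by rewrite !sc_perturbed // n2_0 !mulr0 !addr0 le_max lexx.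
have G_gt0 : 0 < sc (placement b) (q1 alpha) A2.
  apply: lt_le_trans (n2_le_placement_A2 b); apply: mulr_gt0 => //.
  by rewrite /placement_dist; case: b => /=; lra_alpha.
rewrite /eratio (gt_eqF G_gt0); apply: EFin_le_ereal_sup => r r_lt.
have [s s_range close] := exists_small_perturbation G_gt0 (ltW n2_gt0) u1_gt0 r_lt.
apply: le_trans (perturbed_ratio_le_dist_euclid b s_range).
rewrite le_max; apply/orP; left.
have s_range' : 0 <= s <= u - 1 by lra.
have sn2_ge0 : 0 <= s * n2 by apply: mulr_ge0; lra.
have shift_ge : - (s * n2) <= shift b A1 s * n2.
  by rewrite /shift; case: (b) => /=; rewrite ?mulNr; lra.
have Zs_gt0 : 0 < sc (placement b) (q1 alpha) A2 + s * n2 by lra.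
rewrite !sc_perturbed // (_ : shift b A2 s = s); last by case: (b).
by rewrite /eratio (gt_eqF Zs_gt0) lee_fin ler_pdivlMr //; lra.
Qed.

End Election.

Theorem lemma5 (R : realType) (n : nat) (alpha : R) (sigma : 'I_n -> report)
    (halpha : 0 < alpha < 1) :
  dist_euclid alpha sigma A1 =
  Order.max
    (eratio (sc (p1 alpha sigma) (q1 alpha) A1) (sc (p1 alpha sigma) (q1 alpha) A2))
    (Order.max
      (eratio (sc (p2 alpha sigma) (q2 alpha) A1) (sc (p2 alpha sigma) (q2 alpha) A2))
      1%E).
Proof.
case/andP: halpha => alpha_gt0 alpha_lt1.
apply/eqP; rewrite eq_le; apply/andP; split.
  apply: ge_ereal_sup => _ [p [q [pq_cons ->]]].
  rewrite eratio_min ?sc_ge0 // ge_max.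
  rewrite (ratio_le_placements alpha_gt0 alpha_lt1 pq_cons).
  by rewrite !le_max lexx !orbT.
rewrite !ge_max (one_le_dist_euclid _ alpha_gt0 alpha_lt1).
by rewrite (placement_ratio_le_dist_euclid _ alpha_gt0 alpha_lt1 true)
  (placement_ratio_le_dist_euclid _ alpha_gt0 alpha_lt1 false).
Qed.
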